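(* Let $V$ be a Whittaker module of type $\eta$ over $R$ with cyclic Whittaker vector $w$, and suppose $Z_V=(p(\Omega)^n)$ where $p$ is an irreducible polynomial and $n\ge1$. Let $V_i=Rp(\Omega)^iw$ for $i=0,\dots,n$ and $S_i=V_i/V_{i+1}$ for $i=0,\dots,n-1$. Then each $S_i$ is an irreducible Whittaker module of type $\eta$, and the $S_i$ are the factors of a composition series $V=V_0\supseteq V_1\supseteq\cdots\supseteq V_n$ of $V$. In particular, $V$ has finite length.
   Context: Let $f\in\mathbb{C}[H]$ be a polynomial. $R=R(f)$ is the associative $\mathbb{C}$-algebra generated by $E,F,H$ with relations $EF-FE=f(H)$, $HE-EH=E$, $HF-FH=-F$. Let $u\in\mathbb{C}[H]$ satisfy $f(H)=\tfrac12(u(H+1)-u(H))$ and $\Omega=2FE+u(H+1)$; the center $Z(R)$ is the polynomial ring $\mathbb{C}[\Omega]$. Let $R(E)=\mathbb{C}[E]$ and fix an algebra homomorphism $\eta:R(E)\to\mathbb{C}$ with $\eta(E)\neq0$. A vector $v$ of an $R$-module $V$ is a Whittaker vector of type $\eta$ if $Ev=\eta(E)v$; $V$ is a Whittaker module of type $\eta$ with cyclic Whittaker vector $w$ if $w$ is a Whittaker vector and $V=Rw$. $Z_V=\mathrm{Ann}_R(V)\cap Z(R)$. *)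

From mathcomp Require Import all_boot all_algebra.
From mathcomp Require Import reals Rstruct.
From mathcomp.real_closed Require Import complex.

Set Implicit Arguments.
Unset Strict Implicit.
Unset Printing Implicit Defensive.
Import GRing.Theory.
Local Open Scope ring_scope.

Notation C := (Rdefinitions.R[i]).

Section RModules.
Variable V : lmodType C.

Definition peval (q : {poly C}) (T : V -> V) (v : V) : V :=
  \sum_(i < size q) q`_i *: iter i T v.

(* An R(f)-module structure on V is given by the action of the generators
   E, F, H (linear maps) satisfying the defining relations of R(f). *)
Definition Rrel (f : {poly C}) (E F H : V -> V) : Prop :=
  [/\ forall v, E (F v) - F (E v) = peval f H v,
      forall v, H (E v) - E (H v) = E v &
      forall v, H (F v) - F (H v) = - F v].

Definition Omega (u : {poly C}) (E F H : V -> V) (v : V) : V :=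
  2%:R *: F (E v) + peval (u \Po ('X + 1)) H v.

Definition submodule (E F H : V -> V) (S : V -> Prop) : Prop :=
  [/\ S 0, (forall x y, S x -> S y -> S (x + y)),
      (forall (a : C) x, S x -> S (a *: x)) &
      [/\ forall x, S x -> S (E x), forall x, S x -> S (F x)
        & forall x, S x -> S (H x)]].

Definition gen (E F H : V -> V) (x : V) : V -> Prop :=
  fun v => forall S, submodule E F H S -> S x -> S v.

Definition subset_ (A B : V -> Prop) := forall v, A v -> B v.

(* For submodules A <= B, the quotient module B/A is irreducible:
   it is nonzero and has no submodules other than 0 and itself
   (submodules of B/A are the submodules C with A <= C <= B). *)
Definition quot_irreducible (E F H : V -> V) (A B : V -> Prop) : Prop :=
  (exists x, B x /\ ~ A x) /\
  forall S, submodule E F H S -> subset_ A S -> subset_ S B ->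
    subset_ S A \/ subset_ B S.

(* For submodules A <= B, B/A is a Whittaker module of type eta:
   there is x + A in B/A with E(x + A) = eta(E)(x + A) generating B/A,
   i.e. B = R x + A. *)
Definition quot_whittaker (E F H : V -> V) (eta : C) (A B : V -> Prop) : Prop :=
  exists x, [/\ B x, A (E x - eta *: x) &
    forall y, B y -> exists a, gen E F H x a /\ A (y - a)].

Definition composition_series (E F H : V -> V) (m : nat) (W : nat -> V -> Prop) :=
  [/\ forall v, W 0%N v, forall v, W m v -> v = 0 &
      forall i, (i < m)%N ->
        [/\ submodule E F H (W i), submodule E F H (W i.+1),
            subset_ (W i.+1) (W i) & quot_irreducible E F H (W i.+1) (W i)]].

Definition finite_length (E F H : V -> V) : Prop :=
  exists m W, composition_series E F H m W.

End RModules.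

From HB Require Import structures.
From mathcomp Require Import all_boot all_algebra.
From mathcomp Require Import reals Rstruct.
From mathcomp.real_closed Require Import complex.
From Stdlib Require Import Classical.
From mathcomp Require Import zify.
Import GRing.Theory Num.Theory.
Local Open Scope ring_scope.
Set Implicit Arguments.
Unset Strict Implicit.

(* Since the Casimir Ω is central, every x_i = p(Ω)^i w is again a Whittaker
   vector of type η and the V_i are submodules.  As C is algebraically closed,
   p = c (X - a), so (Ω - a) x_i is a multiple of x_{i+1}.  From
   Ω = 2FE + u(H+1) and E x_i = η x_i, F x_i lies in C[H] x_i + V_{i+1}, hence
   V_i = C[H] x_i + V_{i+1}.  A submodule containing g(H) x_i with g ≠ 0
   contains x_i, because E g(H) x_i = η g(H-1) x_i and g(H-1) - g(H) has
   smaller degree; so V_i / V_{i+1} is simple as soon as x_i ∉ V_{i+1}.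
   Finally x_i ∈ V_{i+1} would make p(Ω)^(n-1) kill w, hence V, although
   Z_V = (p(Ω)^n). *)

Lemma comp_XaddC_eq_size (R : numDomainType) (k : {poly R}) (c : R) :
  c != 0 -> k \Po ('X + c%:P) = k -> (size k <= 1)%N.
Proof.
move=> c_neq0 k_periodic.
have k_cst m : k.[c *+ m] = k.[0].
  elim: m => [|m IHm]; first by rewrite mulr0n.
  by rewrite mulrSr -IHm -{2}k_periodic horner_comp hornerD hornerX hornerC.
have : k - (k.[0])%:P = 0.
  apply: (@roots_geq_poly_eq0 _ _ (mkseq (GRing.natmul c) (size (k - (k.[0])%:P)))).
  - by apply/allP => _ /mapP [m _ ->]; rewrite /root !hornerE k_cst subrr.
  - by rewrite map_inj_uniq ?iota_uniq //; apply: mulrIn.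
  - by rewrite size_mkseq.
by move/eqP; rewrite subr_eq0 => /eqP ->; rewrite size_polyC leq_b1.
Qed.

Lemma size_comp_XaddC_subr_lt (R : idomainType) (k : {poly R}) (c : R) :
  k != 0 -> (size (k \Po ('X + c%:P) - k)%R < size k)%N.
Proof.
move=> k_neq0; set d := k \Po ('X + c%:P) - k.
have size_k : size (k \Po ('X + c%:P)) = size k by rewrite size_comp_poly2 ?size_XaddC.
have lead_k : lead_coef (k \Po ('X + c%:P)) = lead_coef k.
  by rewrite lead_coef_comp ?size_XaddC // lead_coefXaddC expr1n mulr1.
have size_d : (size d <= size k)%N.
  by rewrite (leq_trans (size_polyD _ _)) // size_polyN size_k maxnn.
have top_d : d`_(size k).-1 = 0.
  by rewrite coefB -{1}size_k -!lead_coefE lead_k subrr.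
rewrite ltn_neqAle size_d andbT; apply/eqP => size_dk.
have /negP : d != 0 by rewrite -size_poly_eq0 size_dk size_poly_eq0.
by rewrite -lead_coef_eq0 lead_coefE size_dk top_d.
Qed.

Lemma irreducible_closed_linear (R : closedFieldType) (p : {poly R}) :
  irreducible_poly p -> exists c a, c != 0 /\ p = c *: ('X - a%:P).
Proof.
move=> p_irr; have [p_gt1 _] := p_irr.
have [a /rootP pa0] := closed_rootP p (negbT (gtn_eqF p_gt1)).
have /(irredp_XsubCP p_irr)[] : 'X - a%:P %| p by rewrite dvdp_XsubCl; apply/rootP.
  by rewrite -size_poly_eq1 size_XsubC.
rewrite eqp_sym => /eqpP [[c1 c2] /= /andP [c1_neq0 c2_neq0] def_p].
exists (c1^-1 * c2), a; split; first by rewrite mulf_neq0 ?invr_eq0.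
by rewrite -scalerA -def_p scalerA mulVf ?scale1r.
Qed.

Section PolynomialAction.
Variables (V : lmodType C) (T : {linear V -> V}).
Implicit Types (q r : {poly C}) (v : V).

Lemma iter_is_linear k : linear (iter k T).
Proof. by elim: k => [//|k IHk] a x y /=; rewrite IHk linearP. Qed.

HB.instance Definition _ k :=
  GRing.isLinear.Build C V V *:%R (iter k T) (iter_is_linear k).

Lemma peval_is_linear q : linear (peval q T).
Proof.
move=> a x y; rewrite /peval scaler_sumr -big_split /=.
by apply: eq_bigr => i _; rewrite linearP scalerDr !scalerA mulrC.
Qed.

HB.instance Definition _ q :=
  GRing.isLinear.Build C V V *:%R (peval q T) (peval_is_linear q).

Lemma peval_widen q v N : (size q <= N)%N ->
  peval q T v = \sum_(i < N) q`_i *: iter i T v.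
Proof.
move=> le_qN; rewrite /peval (big_ord_widen N (fun i => q`_i *: iter i T v)) //.
rewrite [RHS](bigID (fun i : 'I_N => (i < size q)%N)) /= [X in _ = _ + X]big1 ?addr0 //.
by move=> i; rewrite -leqNgt => le_qi; rewrite nth_default // scale0r.
Qed.

Lemma pevalD q r v : peval (q + r) T v = peval q T v + peval r T v.
Proof.
rewrite !(@peval_widen _ _ (maxn (size q) (size r))) ?leq_maxl ?leq_maxr ?size_polyD //.
by rewrite -big_split /=; apply: eq_bigr => i _; rewrite coefD scalerDl.
Qed.

Lemma pevalZ a q v : peval (a *: q) T v = a *: peval q T v.
Proof.
rewrite !(@peval_widen _ _ (size q)) ?size_scale_leq // scaler_sumr.
by apply: eq_bigr => i _; rewrite coefZ scalerA.
Qed.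

Lemma pevalB q r v : peval (q - r) T v = peval q T v - peval r T v.
Proof. by rewrite pevalD -(scaleN1r r) pevalZ scaleN1r. Qed.

Lemma peval0 v : peval 0 T v = 0.
Proof. by rewrite -(subrr 0) pevalB subrr. Qed.

Lemma pevalC a v : peval a%:P T v = a *: v.
Proof. by rewrite (@peval_widen _ _ 1) ?size_polyC ?leq_b1 // big_ord1 coefC. Qed.

Lemma peval1 v : peval 1 T v = v.
Proof. by rewrite -polyC1 pevalC scale1r. Qed.

Lemma peval_mulX q v : peval (q * 'X) T v = peval q T (T v).
Proof.
rewrite (@peval_widen _ _ (size q).+1); last first.
  by have [->|/size_mulX ->] := eqVneq q 0; rewrite ?mul0r ?size_poly0.
rewrite big_ord_recl coefMX eqxx scale0r add0r /peval.
by apply: eq_bigr => i _; rewrite coefMX /= add0n -iterSr.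
Qed.

Lemma pevalX v : peval 'X T v = T v.
Proof. by rewrite -['X]mul1r peval_mulX peval1. Qed.

Lemma peval_comm q v : T (peval q T v) = peval q T (T v).
Proof.
by rewrite /peval linear_sum; apply: eq_bigr => i _; rewrite linearZ /= -iterS iterSr.
Qed.

Lemma peval_mul q r v : peval (q * r) T v = peval q T (peval r T v).
Proof.
elim/poly_ind: q v => [|q a IHq] v; first by rewrite mul0r !peval0.
rewrite mulrDl mulrAC pevalD mul_polyC pevalZ peval_mulX IHq.
by rewrite pevalD peval_mulX pevalC peval_comm.
Qed.

Lemma peval_closed (S : V -> Prop) q :
  S 0 -> (forall x y, S x -> S y -> S (x + y)) ->
  (forall a x, S x -> S (a *: x)) -> (forall x, S x -> S (T x)) ->
  forall x, S x -> S (peval q T x).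
Proof.
move=> S0 SD SZ ST x Sx; rewrite /peval; elim/big_ind: _ => // i _.
by apply: SZ; elim: (nat_of_ord i) => //= k; apply: ST.
Qed.

End PolynomialAction.

Section ShiftedCommutation.
Variables (V : lmodType C) (S T : {linear V -> V}) (b : C).
Hypothesis ST_shift : forall v, S (T v) = T (S v) + b *: S v.

Lemma peval_shift g v : S (peval g T v) = peval (g \Po ('X + b%:P)) T (S v).
Proof.
elim/poly_ind: g v => [|g a IHg] v; first by rewrite comp_poly0 !peval0 linear0.
rewrite pevalD peval_mulX pevalC linearD linearZ /= IHg ST_shift.
rewrite comp_polyD comp_polyM comp_polyX comp_polyC mulrDr !pevalD.
by rewrite peval_mul pevalX pevalC mulrC mul_polyC pevalZ linearD linearZ.
Qed.

End ShiftedCommutation.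

Lemma peval_commute (V : lmodType C) (S T : {linear V -> V}) :
  (forall v, S (T v) = T (S v)) -> forall g v, S (peval g T v) = peval g T (S v).
Proof.
move=> ST g v; rewrite (@peval_shift _ _ _ 0) ?polyC0 ?addr0 ?comp_polyXr //.
by move=> x; rewrite scale0r addr0.
Qed.

Section Submodules.
Variables (V : lmodType C) (E F H : {linear V -> V}).

Lemma gen_in x : gen E F H x x.
Proof. by move=> S _. Qed.

Lemma gen_min x S : submodule E F H S -> S x -> forall v, gen E F H x v -> S v.
Proof. by move=> S_sub Sx v; apply. Qed.

Lemma gen_submodule x : submodule E F H (gen E F H x).
Proof.
split=> [S [] //|y z y_in z_in S S_sub Sx|a y y_in S S_sub Sx|].
- by have [_ SD _ _] := S_sub; apply: SD; [apply: y_in | apply: z_in].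
- by have [_ _ SZ _] := S_sub; apply: SZ; apply: y_in.
split=> y y_in S S_sub Sx; have [_ _ _ [SE SF SH]] := S_sub.
- by apply: SE; apply: y_in.
- by apply: SF; apply: y_in.
- by apply: SH; apply: y_in.
Qed.

Lemma gen_subset x y : gen E F H x y -> subset_ (gen E F H y) (gen E F H x).
Proof. exact: gen_min (gen_submodule x). Qed.

Lemma submoduleB S x y : submodule E F H S -> S x -> S y -> S (x - y).
Proof. by case=> _ SD SZ _ Sx Sy; apply: SD => //; rewrite -scaleN1r; apply: SZ. Qed.

Lemma submodule_pevalH S g x : submodule E F H S -> S x -> S (peval g H x).
Proof. by case=> S0 SD SZ [_ _ SH]; apply: peval_closed. Qed.

Lemma submodule0 : submodule E F H (fun v => v = 0).
Proof.
split=> [//|_ _ -> ->|a _ ->|]; rewrite ?addr0 ?scaler0 //.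
by split=> _ ->; rewrite linear0.
Qed.

End Submodules.

Section OmegaAction.
Variables (u : {poly C}) (V : lmodType C) (E F H : {linear V -> V}).

Lemma Omega_is_linear : linear (Omega u E F H).
Proof. by move=> a x y; rewrite /Omega !linearP /= !scalerA mulrC addrACA. Qed.

HB.instance Definition _ :=
  GRing.isLinear.Build C V V *:%R (Omega u E F H) Omega_is_linear.

Lemma submodule_peval_Omega S q x :
  submodule E F H S -> S x -> S (peval q (Omega u E F H) x).
Proof.
move=> S_sub; have [S0 SD SZ [SE SF _]] := S_sub; apply: peval_closed => // y Sy.
rewrite /Omega; apply: (SD); first by apply: SZ; apply: SF; apply: SE.
exact: submodule_pevalH S_sub Sy.
Qed.

End OmegaAction.

Section Casimir.
Variables (f u : {poly C}) (V : lmodType C) (E F H : {linear V -> V}).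
Hypothesis hfu : f = 2%:R^-1 *: (u \Po ('X + 1) - u).
Hypothesis hrel : Rrel f E F H.
Local Notation U := (u \Po ('X + 1)).
Local Notation Om := (Omega u E F H).

Lemma EH_shift v : E (H v) = H (E v) + (-1) *: E v.
Proof. by case: hrel => _ HE _; rewrite -{2}(HE v) scaleN1r opprB subrKC. Qed.

Lemma FH_shift v : F (H v) = H (F v) + 1 *: F v.
Proof. by case: hrel => _ _ HF; rewrite scale1r -{2}[F v]opprK -(HF v) opprB subrKC. Qed.

Lemma EF_comm v : E (F v) = F (E v) + peval f H v.
Proof. by case: hrel => EF _ _; rewrite -(EF v) subrKC. Qed.

Lemma scale2_f : 2%:R *: f = U - u.
Proof. by rewrite hfu scalerA mulfV ?pnatr_eq0 // scale1r. Qed.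

Lemma Omega_E v : E (Om v) = Om (E v).
Proof.
rewrite /Omega linearD linearZ /= EF_comm (peval_shift EH_shift).
have -> : U \Po ('X + (-1)%:P) = u.
  by rewrite -comp_polyA comp_polyD comp_polyX comp_polyC polyCN polyC1 subrK comp_polyXr.
by rewrite scalerDr -addrA -pevalZ scale2_f pevalB subrK.
Qed.

Lemma Omega_F v : F (Om v) = Om (F v).
Proof.
rewrite /Omega linearD linearZ /= EF_comm linearD /= !(peval_shift FH_shift).
by rewrite scalerDr -addrA -pevalZ -comp_polyZ scale2_f polyC1 comp_polyB pevalB subrK.
Qed.

Lemma Omega_H v : H (Om v) = Om (H v).
Proof.
rewrite /Omega linearD linearZ /= peval_comm; congr (_ *: _ + _).
by rewrite EH_shift linearD FH_shift linearZ /= !scaleN1r scale1r addrK.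
Qed.

Lemma submodule_ker_peval_Omega q :
  submodule E F H (fun v => peval q Om v = 0).
Proof.
split=> [|y z Oy Oz|a y Oy|];
  rewrite ?linear0 ?linearD ?linearZ /= ?Oy ?Oz ?addr0 ?scaler0 //.
split=> y Oy.
- by rewrite -(peval_commute Omega_E) Oy linear0.
- by rewrite -(peval_commute Omega_F) Oy linear0.
- by rewrite -(peval_commute Omega_H) Oy linear0.
Qed.

Variables (eta : C) (x : V).
Hypotheses (eta_neq0 : eta != 0) (whittaker_x : E x = eta *: x).

Lemma submodule_peval_whittaker S g :
  submodule E F H S -> g != 0 -> S (peval g H x) -> S x.
Proof.
move=> S_sub; have [_ _ SZ [SE _ _]] := S_sub.
elim: (size g) {-2}g (leqnn (size g)) => [|N IHN] {}g le_gN g_neq0 Sg.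
  by move: g_neq0; rewrite -size_poly_eq0 -leqn0 le_gN.
have [le_g1|lt1g] := leqP (size g) 1.
  have g0_neq0 : g`_0 != 0.
    by apply: contraNneq g_neq0 => g00; rewrite (size1_polyC le_g1) g00.
  move: Sg; rewrite [X in peval X](size1_polyC le_g1) pevalC => /(SZ (g`_0)^-1).
  by rewrite scalerA mulVf ?scale1r.
set d := g \Po ('X + (-1)%:P) - g.
have d_neq0 : d != 0.
  apply: contraTneq lt1g => /eqP; rewrite subr_eq0 => /eqP.
  by move/comp_XaddC_eq_size; rewrite -leqNgt; apply; rewrite oppr_eq0 oner_eq0.
apply: (IHN d) => //.
  by rewrite -ltnS (leq_trans (size_comp_XaddC_subr_lt _ g_neq0)).
rewrite /d pevalB; apply: (submoduleB S_sub _ Sg).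
have := SZ eta^-1 _ (SE _ Sg).
by rewrite (peval_shift EH_shift) whittaker_x linearZ /= scalerA mulVf ?scale1r.
Qed.

Lemma Omega_whittaker : Om x = (2%:R * eta) *: F x + peval U H x.
Proof. by rewrite /Omega whittaker_x linearZ scalerA. Qed.

Lemma submodule_polyH_span A a :
  submodule E F H A -> A (Om x - a *: x) ->
  submodule E F H (fun v => exists g, A (v - peval g H x)).
Proof.
move=> A_sub A_Om; have [A0 AD AZ [AE AF AH]] := A_sub.
have Fx : F x = (2%:R * eta)^-1 *: (peval (a%:P - U) H x + (Om x - a *: x)).
  rewrite Omega_whittaker pevalB pevalC addrC subrKA addrK.
  by rewrite scalerA mulVf ?scale1r // mulf_neq0 ?pnatr_eq0.
split=> [|y z [g Ag] [h Ah]|b y [g Ag]|].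
- by exists 0; rewrite peval0 subr0.
- by exists (g + h); rewrite pevalD opprD addrACA; apply: AD.
- by exists (b *: g); rewrite pevalZ -scalerBr; apply: AZ.
split=> y [g Ag].
- exists (eta *: (g \Po ('X + (-1)%:P))).
  by rewrite pevalZ -linearZ /= -whittaker_x -(peval_shift EH_shift) -linearB; apply: AE.
- exists ((2%:R * eta)^-1 *: ((g \Po ('X + 1%:P)) * (a%:P - U))).
  set c := (2%:R * eta)^-1; set g1 := g \Po _.
  have F_gx : F (peval g H x)
      = c *: (peval (g1 * (a%:P - U)) H x + peval g1 H (Om x - a *: x)).
    rewrite (peval_shift FH_shift) Fx (linearZ_LR (peval g1 H)).
    by rewrite (linearD (peval g1 H)) peval_mul.
  have := AD _ _ (AF _ Ag) (AZ c _ (submodule_pevalH g1 A_sub A_Om)).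
  by rewrite (linearB F) F_gx pevalZ scalerDr opprD addrA subrK.
- by exists (g * 'X); rewrite peval_mulX -peval_comm -linearB; apply: AH.
Qed.

Lemma gen_whittaker_decomp A a :
  submodule E F H A -> A (Om x - a *: x) ->
  forall v, gen E F H x v -> exists g, A (v - peval g H x).
Proof.
move=> A_sub A_Om; apply: gen_min (submodule_polyH_span A_sub A_Om) _.
by exists 1; rewrite peval1 subrr; case: A_sub.
Qed.

Lemma quot_irreducible_whittaker A a :
  submodule E F H A -> A (Om x - a *: x) -> ~ A x ->
  quot_irreducible E F H A (gen E F H x).
Proof.
move=> A_sub A_Om Ax; split; first by exists x; split; first exact: gen_in.
move=> S S_sub AS S_gen.
have [[v [Sv Av]]|S_A] := classic (exists v, S v /\ ~ A v); last first.
  by left=> v Sv; apply: NNPP => Av; apply: S_A; exists v.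
right; have [g Ag] := gen_whittaker_decomp A_sub A_Om (S_gen _ Sv).
have gH_neq0 : g != 0 by apply/eqP => g0; apply: Av; rewrite g0 peval0 subr0 in Ag.
have Sg : S (peval g H x).
  by have := submoduleB S_sub Sv (AS _ Ag); rewrite opprB addrC subrK.
exact: gen_min S_sub (submodule_peval_whittaker S_sub gH_neq0 Sg).
Qed.

End Casimir.

Section CyclicWhittakerModule.
Variables (f u : {poly C}) (V : lmodType C) (E F H : {linear V -> V}).
Hypothesis hfu : f = 2%:R^-1 *: (u \Po ('X + 1) - u).
Hypothesis hrel : Rrel f E F H.
Variables (eta : C) (w : V) (p : {poly C}) (n : nat).
Hypotheses (eta_neq0 : eta != 0) (p_irr : irreducible_poly p).
Hypotheses (hw : E w = eta *: w) (hcyc : forall v, gen E F H w v).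
Hypothesis hZ : forall q : {poly C},
  (forall v, peval q (Omega u E F H) v = 0) <-> (p ^+ n %| q).
Local Notation Om := (Omega u E F H).
Local Notation x i := (peval (p ^+ i) Om w).

Lemma whittaker_pow i : E (x i) = eta *: x i.
Proof. by rewrite (peval_commute (Omega_E hfu hrel)) hw linearZ. Qed.

Lemma peval_pow k i : peval (p ^+ k) Om (x i) = x (k + i).
Proof. by rewrite -peval_mul exprD. Qed.

Lemma gen_pow_succ_subset i : subset_ (gen E F H (x i.+1)) (gen E F H (x i)).
Proof.
apply: gen_subset; rewrite -add1n -peval_pow.
exact: submodule_peval_Omega (gen_submodule E F H _) (@gen_in _ E F H _).
Qed.

Lemma pow_notin_gen_succ i : (i < n)%N -> ~ gen E F H (x i.+1) (x i).
Proof.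
move=> lt_in x_in; have [size_p _] := p_irr.
have kill_succ : peval (p ^+ (n.-1 - i)) Om (x i.+1) = 0.
  rewrite peval_pow (_ : _ + _ = n)%N; last by lia.
  by apply: (hZ _).2.
have := gen_min (submodule_ker_peval_Omega hfu hrel _) kill_succ x_in.
rewrite peval_pow (_ : _ + _ = n.-1)%N; last by lia.
move=> kill_w; have /hZ : forall v, peval (p ^+ n.-1) Om v = 0.
  by move=> v; apply: gen_min (submodule_ker_peval_Omega hfu hrel _) kill_w _ (hcyc v).
by rewrite dvdp_Pexp2l //; lia.
Qed.

Lemma Omega_pow_sub i : exists a, gen E F H (x i.+1) (Om (x i) - a *: x i).
Proof.
have [c [a [c_neq0 def_p]]] := irreducible_closed_linear p_irr; exists a.
have -> : Om (x i) - a *: x i = c^-1 *: x i.+1.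
  rewrite -add1n -peval_pow expr1 def_p pevalZ pevalB pevalX pevalC.
  by rewrite scalerA mulVf ?scale1r.
have [_ _ genZ _] := gen_submodule E F H (x i.+1).
by apply: genZ; apply: gen_in.
Qed.

Lemma quot_irreducible_pow i : (i < n)%N ->
  quot_irreducible E F H (gen E F H (x i.+1)) (gen E F H (x i)).
Proof.
move=> lt_in; have [a Om_x] := Omega_pow_sub i.
apply: (quot_irreducible_whittaker hrel eta_neq0 (whittaker_pow i)) Om_x _.
  exact: gen_submodule.
exact: pow_notin_gen_succ.
Qed.

Lemma quot_whittaker_pow i :
  quot_whittaker E F H eta (gen E F H (x i.+1)) (gen E F H (x i)).
Proof.
have [gen0 _ _ _] := gen_submodule E F H (x i.+1).
exists (x i); split; first exact: gen_in.
  by rewrite whittaker_pow subrr.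
by move=> y y_in; exists y; rewrite subrr.
Qed.

Lemma composition_series_pow :
  composition_series E F H n (fun i => gen E F H (x i)).
Proof.
split.
- by move=> v; rewrite expr0 peval1.
- by apply: gen_min (submodule0 E F H) _; apply: (hZ _).2.
- move=> i lt_in; split; [exact: gen_submodule | exact: gen_submodule | |].
    exact: gen_pow_succ_subset.
  exact: quot_irreducible_pow.
Qed.

End CyclicWhittakerModule.

Theorem mainTheorem11
  (f u : {poly C})
  (hfu : f = 2%:R^-1 *: (u \Po ('X + 1) - u))
  (V : lmodType C) (E F H : {linear V -> V})
  (hrel : Rrel f E F H)
  (eta : C) (heta : eta != 0)
  (w : V) (hw : E w = eta *: w) (hcyc : forall v, gen E F H w v)
  (p : {poly C}) (n : nat) (hp : irreducible_poly p) (hn : (0 < n)%N)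
  (hZ : forall q : {poly C},
          (forall v, peval q (Omega u E F H) v = 0) <-> (p ^+ n %| q)) :
  let Vi := fun i : nat => gen E F H (peval (p ^+ i) (Omega u E F H) w) in
  (forall i, (i < n)%N ->
     quot_irreducible E F H (Vi i.+1) (Vi i) /\
     quot_whittaker E F H eta (Vi i.+1) (Vi i))
  /\ composition_series E F H n Vi
  /\ finite_length E F H.
Proof.
move=> Vi.
have series : composition_series E F H n Vi :=
  composition_series_pow hfu hrel heta hp hw hcyc hZ.
split; last by split; [exact: series | exists n, Vi].
move=> i lt_in; split.
- exact (quot_irreducible_pow hfu hrel heta hp hw hcyc hZ lt_in).
- exact (quot_whittaker_pow hfu hrel p hw i).
Qed.
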